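(* Let $f(t)=\frac{1-e^{-t}}{t}$, let $a>0$, $b>0$, let $0<\lambda_1\le\lambda_2\le\dots\le\lambda_M$ and $0\le\bar x\le\sum_{m=1}^M\lambda_m$. Consider $$\max_{\bm c}\ \sum_{m=1}^M c_m f(a+bc_m)\quad\text{s.t.}\quad \sum_{m=1}^M c_m=\bar x,\quad 0\le c_m\le\lambda_m\ \forall m.$$ Then $g(c)=f(a+bc)+bc f'(a+bc)$ satisfies $g(c)\ge e^{-(a+bc)}>0$ and is strictly decreasing in $c\ge0$, and the problem has the unique optimal solution $c_m^*=\min\{\lambda_m,C_0\}$, $m=1,\dots,M$, where $C_0=\bar x/M$ if $\bar x/M\le\lambda_1$, and otherwise $C_0=\frac{\bar x-\sum_{i=1}^n\lambda_i}{M-n}$ for the index $n\in\{1,\dots,M-1\}$ with $\lambda_n<\frac{\bar x-\sum_{i=1}^n\lambda_i}{M-n}\le\lambda_{n+1}$ (equivalently, $C_0$ is such that $\sum_m\min\{\lambda_m,C_0\}=\bar x$).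
   Context: This is the inner problem $\mathcal{P}2.1$ of the unbiased case $B_1=\dots=B_M$, in which, for a fixed total caching density $\bar x=\sum_m c_m$, the active ratio $\rho$ is common to all groups and $\varphi_m=\pi R^2(\bar x+\lambda_B\theta_B+c_m\rho\theta_I)$; so $a=\pi R^2(\bar x+\lambda_B\theta_B)$, $b=\pi R^2\rho\theta_I$. $\lambda_m$ is the density of interested users in group $m$ and $c_m$ the caching density. *)

From Stdlib Require Import Reals Lra Lia.
Open Scope R_scope.

Definition fhit (t : R) : R := (1 - exp (- t)) / t.

Fixpoint rsum (n : nat) (F : nat -> R) : R :=
  match n with
  | O => 0
  | S k => rsum k F + F k
  end.

(* Objective  sum_{m} c_m f(a + b c_m)  over groups m = 0..M-1
   (group m+1 of the paper is index m here). *)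
Definition objective (M : nat) (a b : R) (c : nat -> R) : R :=
  rsum M (fun m => c m * fhit (a + b * c m)).

Definition feasible (M : nat) (lam : nat -> R) (xbar : R) (c : nat -> R) : Prop :=
  rsum M c = xbar /\ (forall m, (m < M)%nat -> 0 <= c m <= lam m).

From Stdlib Require Import Reals Lra Lia.
From Coquelicot Require Import Coquelicot.
Open Scope R_scope.

(* Write t = a + b c and u(c) = c f(a + b c) for the per-group utility.
   1. Calculus of f: f'(t) = ((t+1)e^{-t} - 1)/t^2 is negative and
      nondecreasing on t > 0 (its derivative (2 - e^{-t}(t^2+2t+2))/t^3 is
      nonnegative because e^t > 1 + t + t^2/2).
   2. The marginal utility g(c) = f(t) + b c f'(t) = u'(c) equals
      e^{-t} - a f'(t); hence g(c) > e^{-t} and g is strictly decreasing.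
      By the mean value theorem u lies strictly below its tangents on c >= 0.
   3. Water filling for any such strictly concave u: if C0 >= 0, every
      feasible c with the same total as c*_m = min(lam_m, C0) satisfies the
      termwise bound u(c_m) <= u(c*_m) + g(C0)(c_m - c*_m), strictly when
      c_m <> c*_m; summing gives optimality and uniqueness of c*.
   4. Existence of the water level C0 with the required closed form, found
      by a discrete search over the number n of capped groups. *)

Definition dfhit (t : R) : R := ((t + 1) * exp (- t) - 1) / (t * t).
Definition d2fhit (t : R) : R := (2 - exp (- t) * (t * t + 2 * t + 2)) / (t * t * t).

Lemma fhit_derivable t : 0 < t -> derivable_pt_lim fhit t (dfhit t).
Proof.
  intros Ht. apply is_derive_Reals. unfold fhit, dfhit.
  auto_derive; [lra | field; lra].
Qed.

Lemma dfhit_derivable t : 0 < t -> derivable_pt_lim dfhit t (d2fhit t).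
Proof.
  intros Ht. apply is_derive_Reals. unfold dfhit, d2fhit.
  auto_derive; [nra | field; lra].
Qed.

Lemma exp_gt_quadratic t : 0 < t -> 1 + t + t * t / 2 < exp t.
Proof.
  intros Ht.
  destruct (MVT_cor2 (fun x => exp x - 1 - x - x * x / 2) (fun x => exp x - 1 - x)
              0 t Ht) as [c [Hmvt Hc]].
  { intros c _. apply is_derive_Reals. auto_derive; [auto | field]. }
  assert (1 + c < exp c) by (apply exp_ineq1; lra).
  rewrite exp_0 in Hmvt. nra.
Qed.

Lemma exp_opp_mul t : exp (- t) * exp t = 1.
Proof. rewrite exp_Ropp. apply Rinv_l. apply Rgt_not_eq, exp_pos. Qed.

Lemma d2fhit_nonneg t : 0 < t -> 0 <= d2fhit t.
Proof.
  intros Ht. unfold d2fhit.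
  pose proof (exp_gt_quadratic t Ht). pose proof (exp_opp_mul t).
  pose proof (exp_pos (- t)).
  apply Rdiv_le_0_compat; [nra | assert (0 < t * t) by nra; nra].
Qed.

Lemma dfhit_mono t1 t2 : 0 < t1 -> t1 <= t2 -> dfhit t1 <= dfhit t2.
Proof.
  intros H1 H2. destruct (Req_dec t1 t2) as [-> | Hne]; [lra |].
  destruct (MVT_cor2 dfhit d2fhit t1 t2) as [c [Hmvt Hc]]; [lra | |].
  - intros c Hc. apply dfhit_derivable. lra.
  - pose proof (d2fhit_nonneg c ltac:(lra)). nra.
Qed.

(* f is strictly decreasing: f'(t) < 0, since e^t > 1 + t. *)
Lemma dfhit_neg t : 0 < t -> dfhit t < 0.
Proof.
  intros Ht. unfold dfhit.
  pose proof (exp_ineq1 t ltac:(lra)). pose proof (exp_opp_mul t).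
  pose proof (exp_pos (- t)).
  apply Rmult_neg_pos; [| apply Rinv_0_lt_compat; nra].
  assert ((t + 1) * exp (- t) < exp t * exp (- t)) by (apply Rmult_lt_compat_r; lra).
  nra.
Qed.

Definition utility (a b c : R) : R := c * fhit (a + b * c).
Definition marginal (a b c : R) : R := fhit (a + b * c) + b * c * dfhit (a + b * c).

Lemma utility_derivable a b c :
  0 < a + b * c -> derivable_pt_lim (utility a b) c (marginal a b c).
Proof.
  intros H. apply is_derive_Reals. unfold utility, marginal, fhit, dfhit.
  auto_derive; [lra | field; lra].
Qed.

Lemma marginal_eq a b c :
  0 < a + b * c -> marginal a b c = exp (- (a + b * c)) - a * dfhit (a + b * c).
Proof.
  intros H. unfold marginal. set (t := a + b * c).
  replace (b * c) with (t - a) by (unfold t; ring).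
  unfold fhit, dfhit. field. unfold t; lra.
Qed.

Lemma marginal_gt_exp a b c :
  0 < a -> 0 < a + b * c -> exp (- (a + b * c)) < marginal a b c.
Proof.
  intros ha H. rewrite marginal_eq by exact H.
  pose proof (dfhit_neg _ H). nra.
Qed.

Lemma marginal_decr a b c1 c2 :
  0 < a -> 0 < b -> 0 <= c1 -> c1 < c2 -> marginal a b c2 < marginal a b c1.
Proof.
  intros ha hb H1 H2. rewrite !marginal_eq by nra.
  pose proof (exp_increasing (- (a + b * c2)) (- (a + b * c1)) ltac:(nra)).
  pose proof (dfhit_mono (a + b * c1) (a + b * c2) ltac:(nra) ltac:(nra)).
  nra.
Qed.

Lemma utility_below_tangent a b x y :
  0 < a -> 0 < b -> 0 <= x -> 0 <= y -> x <> y ->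
  utility a b y < utility a b x + marginal a b x * (y - x).
Proof.
  intros ha hb hx hy hne. destruct (Rlt_or_le x y) as [Hlt | Hle].
  - destruct (MVT_cor2 (utility a b) (marginal a b) x y Hlt) as [c [Hmvt Hc]].
    { intros c Hc. apply utility_derivable. nra. }
    pose proof (marginal_decr a b x c ha hb hx ltac:(lra)). nra.
  - destruct (MVT_cor2 (utility a b) (marginal a b) y x ltac:(lra)) as [c [Hmvt Hc]].
    { intros c Hc. apply utility_derivable. nra. }
    pose proof (marginal_decr a b c x ha hb ltac:(lra) ltac:(lra)). nra.
Qed.

Lemma rsum_ext n F H : (forall m, (m < n)%nat -> F m = H m) -> rsum n F = rsum n H.
Proof.
  induction n as [| n IH]; simpl; intros E; [reflexivity |].
  rewrite IH by (intros; apply E; lia). rewrite E by lia. reflexivity.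
Qed.

Lemma rsum_const n k : rsum n (fun _ => k) = INR n * k.
Proof. induction n as [| n IH]; simpl rsum; [simpl; ring | rewrite IH, S_INR; ring]. Qed.

Lemma rsum_split n d F : rsum (n + d) F = rsum n F + rsum d (fun i => F (n + i)%nat).
Proof.
  induction d as [| d IH]; [simpl; rewrite Nat.add_0_r; ring |].
  rewrite Nat.add_succ_r. simpl. rewrite IH. ring.
Qed.

Lemma rsum_affine n F H K :
  rsum n (fun m => F m + K * H m) = rsum n F + K * rsum n H.
Proof. induction n as [| n IH]; simpl; [ring | rewrite IH; ring]. Qed.

Lemma rsum_minus n F H : rsum n (fun m => F m - H m) = rsum n F - rsum n H.
Proof. induction n as [| n IH]; simpl; [ring | rewrite IH; ring]. Qed.

Lemma rsum_le n F H : (forall m, (m < n)%nat -> F m <= H m) -> rsum n F <= rsum n H.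
Proof.
  induction n as [| n IH]; simpl; intros E; [lra |].
  pose proof (IH ltac:(intros; apply E; lia)). pose proof (E n ltac:(lia)). lra.
Qed.

Lemma rsum_lt n F H :
  (forall m, (m < n)%nat -> F m <= H m) -> (exists m, (m < n)%nat /\ F m < H m) ->
  rsum n F < rsum n H.
Proof.
  induction n as [| n IH]; simpl; intros E [m [Hm Hlt]]; [lia |].
  destruct (Nat.eq_dec m n) as [-> | Hne].
  - pose proof (rsum_le n F H ltac:(intros; apply E; lia)). lra.
  - pose proof (IH ltac:(intros; apply E; lia) ltac:(exists m; split; [lia | auto])).
    pose proof (E n ltac:(lia)). lra.
Qed.

Section WaterFilling.
Variables (u g : R -> R).
Hypothesis u_below_tangent :
  forall x y, 0 <= x -> 0 <= y -> x <> y -> u y < u x + g x * (y - x).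
Hypothesis g_decr : forall x y, 0 <= x -> x < y -> g y < g x.

(* Termwise KKT bound: at c* = min(L, C0) the slope g(C0) supports u on [0, L],
   since either c* = C0, or c* = L < C0 and only moves below L are allowed. *)
Lemma capped_below_tangent L C0 x :
  0 <= C0 -> 0 <= x <= L -> x <> Rmin L C0 ->
  u x < u (Rmin L C0) + g C0 * (x - Rmin L C0).
Proof.
  intros hC hx hne.
  assert (Hs : 0 <= Rmin L C0) by (apply Rmin_glb; lra).
  pose proof (u_below_tangent (Rmin L C0) x Hs ltac:(lra) (not_eq_sym hne)).
  enough (g (Rmin L C0) * (x - Rmin L C0) <= g C0 * (x - Rmin L C0)) by lra.
  unfold Rmin in *. destruct Rle_dec as [Hle | Hgt]; [| lra].
  destruct (Req_dec L C0) as [-> | HLC]; [lra |].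
  pose proof (g_decr L C0 ltac:(lra) ltac:(lra)). nra.
Qed.

Variables (M : nat) (lam : nat -> R) (C0 : R).
Hypothesis C0_nonneg : 0 <= C0.

Lemma capped_below_tangent_le c m :
  0 <= c m <= lam m ->
  u (c m) <= u (Rmin (lam m) C0) + g C0 * (c m - Rmin (lam m) C0).
Proof.
  intros hc. destruct (Req_dec (c m) (Rmin (lam m) C0)) as [E | E].
  - rewrite E. lra.
  - apply Rlt_le, capped_below_tangent; assumption.
Qed.

(* Summing the termwise bounds: the linear term vanishes for equal totals. *)
Lemma water_filling_sum c :
  rsum M c = rsum M (fun m => Rmin (lam m) C0) ->
  rsum M (fun m => u (Rmin (lam m) C0) + g C0 * (c m - Rmin (lam m) C0))
  = rsum M (fun m => u (Rmin (lam m) C0)).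
Proof.
  intros Hsum. rewrite rsum_affine, rsum_minus, Hsum. ring.
Qed.

Lemma water_filling_optimal c :
  (forall m, (m < M)%nat -> 0 <= c m <= lam m) ->
  rsum M c = rsum M (fun m => Rmin (lam m) C0) ->
  rsum M (fun m => u (c m)) <= rsum M (fun m => u (Rmin (lam m) C0)).
Proof.
  intros Hbox Hsum. rewrite <- (water_filling_sum c Hsum).
  apply rsum_le. intros m Hm. apply capped_below_tangent_le, Hbox, Hm.
Qed.

Lemma water_filling_unique c :
  (forall m, (m < M)%nat -> 0 <= c m <= lam m) ->
  rsum M c = rsum M (fun m => Rmin (lam m) C0) ->
  rsum M (fun m => u (c m)) = rsum M (fun m => u (Rmin (lam m) C0)) ->
  forall m, (m < M)%nat -> c m = Rmin (lam m) C0.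
Proof.
  intros Hbox Hsum Hobj m Hm.
  destruct (Req_dec (c m) (Rmin (lam m) C0)) as [E | E]; [exact E | exfalso].
  enough (rsum M (fun m => u (c m)) < rsum M (fun m => u (Rmin (lam m) C0))) by lra.
  rewrite <- (water_filling_sum c Hsum).
  apply rsum_lt.
  - intros k Hk. apply capped_below_tangent_le, Hbox, Hk.
  - exists m. split; [exact Hm |]. apply capped_below_tangent; auto.
Qed.

End WaterFilling.

Section WaterLevel.
Variables (M : nat) (lam : nat -> R) (xbar : R).
Hypothesis hM : (1 <= M)%nat.
Hypothesis hlam_pos : forall m, (m < M)%nat -> 0 < lam m.
Hypothesis hlam_sorted : forall i j, (i <= j)%nat -> (j < M)%nat -> lam i <= lam j.
Hypothesis hx0 : 0 <= xbar.
Hypothesis hx1 : xbar <= rsum M lam.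

(* Common level of the groups n..M-1 when the n smallest groups are capped. *)
Definition level (n : nat) : R := (xbar - rsum n lam) / INR (M - n).

Definition water_level_spec (C0 : R) : Prop :=
  (xbar / INR M <= lam 0%nat /\ C0 = xbar / INR M) \/
  (lam 0%nat < xbar / INR M /\
   exists n : nat, (1 <= n)%nat /\ (n <= M - 1)%nat /\
     lam (n - 1)%nat < level n /\ level n <= lam n /\ C0 = level n).

(* If group k overflows level k, capping it raises the level of the rest. *)
Lemma level_step k : (k + 1 <= M - 1)%nat -> lam k < level k -> lam k < level (S k).
Proof.
  intros Hk Hl. unfold level in *.
  replace (M - k)%nat with (S (M - S k)) in Hl by lia. rewrite S_INR in Hl.
  assert (0 < INR (M - S k)) by (apply lt_0_INR; lia).
  simpl rsum. apply Rmult_lt_reg_r with (INR (M - S k)); [lra |].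
  unfold Rdiv. rewrite Rmult_assoc, Rinv_l by lra.
  apply Rmult_lt_compat_r with (r := INR (M - S k) + 1) in Hl; [| lra].
  unfold Rdiv in Hl. rewrite Rmult_assoc, Rinv_l in Hl by lra. lra.
Qed.

Lemma level_last : level (M - 1) <= lam (M - 1).
Proof.
  unfold level. replace (M - (M - 1))%nat with 1%nat by lia. simpl INR.
  replace M with (S (M - 1)) in hx1 by lia. simpl in hx1. lra.
Qed.

(* Discrete intermediate value search for the number n of capped groups. *)
Lemma level_crossing d : forall k, (k + d = M - 1)%nat -> lam k < level k ->
  exists n, (k + 1 <= n <= M - 1)%nat /\ lam (n - 1) < level n <= lam n.
Proof.
  induction d as [| d IH]; intros k Hkd Hl.
  - replace k with (M - 1)%nat in Hl by lia. pose proof level_last. lra.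
  - pose proof (level_step k ltac:(lia) Hl) as Hs.
    destruct (Rle_dec (level (S k)) (lam (S k))) as [Hle | Hgt].
    + exists (S k). replace (S k - 1)%nat with k by lia. split; [lia | lra].
    + destruct (IH (S k) ltac:(lia) ltac:(lra)) as [n [Hn Hcross]].
      exists n. split; [lia | exact Hcross].
Qed.

Lemma water_level_uniform : xbar / INR M <= lam 0%nat ->
  rsum M (fun m => Rmin (lam m) (xbar / INR M)) = xbar.
Proof.
  intros Hc. assert (0 < INR M) by (apply lt_0_INR; lia).
  rewrite (rsum_ext M _ (fun _ => xbar / INR M)).
  - rewrite rsum_const. field. lra.
  - intros m Hm. apply Rmin_right.
    pose proof (hlam_sorted 0%nat m ltac:(lia) Hm). lra.
Qed.

Lemma water_level_capped n : (1 <= n <= M - 1)%nat ->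
  lam (n - 1) < level n <= lam n -> rsum M (fun m => Rmin (lam m) (level n)) = xbar.
Proof.
  intros Hn [Hbelow Habove].
  assert (0 < INR (M - n)) by (apply lt_0_INR; lia).
  replace M with (n + (M - n))%nat at 1 by lia. rewrite rsum_split.
  rewrite (rsum_ext n _ lam), (rsum_ext (M - n) _ (fun _ => level n)).
  - rewrite rsum_const. unfold level. field. lra.
  - intros i Hi. apply Rmin_right.
    pose proof (hlam_sorted n (n + i)%nat ltac:(lia) ltac:(lia)). lra.
  - intros m Hm. apply Rmin_left.
    pose proof (hlam_sorted m (n - 1)%nat ltac:(lia) ltac:(lia)). lra.
Qed.

Lemma water_level_exists : exists C0, water_level_spec C0 /\ 0 <= C0 /\
  rsum M (fun m => Rmin (lam m) C0) = xbar.
Proof.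
  assert (0 < INR M) by (apply lt_0_INR; lia).
  destruct (Rle_dec (xbar / INR M) (lam 0%nat)) as [Hc | Hc].
  - exists (xbar / INR M). split; [left; auto |].
    split; [apply Rdiv_le_0_compat; lra | apply water_level_uniform, Hc].
  - assert (HM2 : (1 <= M - 1)%nat).
    { destruct (Nat.eq_dec M 1) as [E | E]; [| lia]. subst M.
      simpl in hx1. simpl INR in Hc. rewrite Rdiv_1 in Hc. lra. }
    assert (Hl0 : lam 0%nat < level 0).
    { unfold level. rewrite Nat.sub_0_r. simpl rsum. rewrite Rminus_0_r. lra. }
    destruct (level_crossing (M - 1) 0%nat ltac:(lia) Hl0) as [n [Hn Hcross]].
    pose proof (hlam_pos (n - 1)%nat ltac:(lia)).
    exists (level n). split; [right; split; [lra | exists n; repeat split; (lia || lra)] |].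
    split; [lra | apply water_level_capped; [lia | exact Hcross]].
Qed.

End WaterLevel.

Theorem mainTheorem6 (a b : R) (M : nat) (lam : nat -> R) (xbar : R)
  (ha : 0 < a) (hb : 0 < b) (hM : (1 <= M)%nat)
  (hlam_pos : forall m, (m < M)%nat -> 0 < lam m)
  (hlam_sorted : forall i j, (i <= j)%nat -> (j < M)%nat -> lam i <= lam j)
  (hx0 : 0 <= xbar) (hx1 : xbar <= rsum M lam) :
  (forall c, 0 <= c ->
     (exists d, derivable_pt_lim fhit (a + b * c) d) /\
     (forall d, derivable_pt_lim fhit (a + b * c) d ->
        exp (- (a + b * c)) <= fhit (a + b * c) + b * c * d /\
        0 < exp (- (a + b * c)))) /\
  (forall c1 c2 d1 d2, 0 <= c1 -> c1 < c2 ->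
     derivable_pt_lim fhit (a + b * c1) d1 ->
     derivable_pt_lim fhit (a + b * c2) d2 ->
     fhit (a + b * c2) + b * c2 * d2 < fhit (a + b * c1) + b * c1 * d1) /\
  (exists C0 : R,
     ((xbar / INR M <= lam 0%nat /\ C0 = xbar / INR M) \/
      (lam 0%nat < xbar / INR M /\
       exists n : nat, (1 <= n)%nat /\ (n <= M - 1)%nat /\
         lam (n - 1)%nat < (xbar - rsum n lam) / INR (M - n) /\
         (xbar - rsum n lam) / INR (M - n) <= lam n /\
         C0 = (xbar - rsum n lam) / INR (M - n))) /\
     rsum M (fun m => Rmin (lam m) C0) = xbar /\
     feasible M lam xbar (fun m => Rmin (lam m) C0) /\
     (forall c, feasible M lam xbar c ->
        objective M a b c <= objective M a b (fun m => Rmin (lam m) C0)) /\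
     (forall c, feasible M lam xbar c ->
        objective M a b c = objective M a b (fun m => Rmin (lam m) C0) ->
        forall m, (m < M)%nat -> c m = Rmin (lam m) C0)).
Proof.
  (* Any derivative of f at a + b c is dfhit, so g = marginal. *)
  assert (Hd : forall c d, 0 <= c -> derivable_pt_lim fhit (a + b * c) d ->
            d = dfhit (a + b * c)).
  { intros c d Hc D. assert (Ht : 0 < a + b * c) by nra.
    exact (uniqueness_limite _ _ _ _ D (fhit_derivable _ Ht)). }
  split; [| split].
  - intros c Hc. split; [exists (dfhit (a + b * c)); apply fhit_derivable; nra |].
    intros d D. rewrite (Hd c d Hc D). split; [| apply exp_pos].
    apply Rlt_le, marginal_gt_exp; [exact ha | nra].
  - intros c1 c2 d1 d2 H1 H2 D1 D2.
    rewrite (Hd c1 d1 H1 D1), (Hd c2 d2 ltac:(lra) D2).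
    exact (marginal_decr a b c1 c2 ha hb H1 H2).
  - destruct (water_level_exists M lam xbar hM hlam_pos hlam_sorted hx0 hx1)
      as [C0 [Hspec [HC0 Hsum]]].
    pose proof (fun x y => utility_below_tangent a b x y ha hb) as Htangent.
    pose proof (fun x y => marginal_decr a b x y ha hb) as Hdecr.
    assert (Htotal : forall c, rsum M c = xbar ->
              rsum M c = rsum M (fun m => Rmin (lam m) C0)) by congruence.
    exists C0. split; [exact Hspec | split; [exact Hsum |]].
    split; [| split].
    + split; [exact Hsum |]. intros m Hm. pose proof (hlam_pos m Hm).
      split; [apply Rmin_glb; lra | apply Rmin_l].
    + intros c [Hc Hbox].
      exact (water_filling_optimal _ _ Htangent Hdecr M lam C0 HC0 c Hbox (Htotal c Hc)).
    + intros c [Hc Hbox].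
      exact (water_filling_unique _ _ Htangent Hdecr M lam C0 HC0 c Hbox (Htotal c Hc)).
Qed.
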